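(* Let $X$ be a finite set and $r,k$ integers with $r\ge 3$, $k\ge r$, $k\ge 5$ and $|X|-k\ge\max(7,r)$. Let $\mathcal{F}$ be a clone on $X$ such that either $f_{r;1,2}\in\mathcal{F}$, or (weaker) for every one-to-one $\bar a\in X^r$ there is $f_{\bar a}\in\mathcal{F}$ with $f_{\bar a}(\bar a)=a_2$ and $f_{\bar a}(\bar b)=b_1$ for every $\bar b\in X^r$ that is not one-to-one. Let $\mathfrak{C}$ be a nonempty symmetric family of choice functions for $\binom{X}{k}$ which is closed under every $f\in\mathcal{F}$. Then $\mathfrak{C}$ is full, i.e. every choice function for $\binom{X}{k}$ belongs to $\mathfrak{C}$.
   Context: A clone on $X$: set of finitary operations on $X$ containing all projections and closed under composition. $\binom{X}{k}=\{Y\subseteq X:|Y|=k\}$; a choice function $c$ satisfies $c(Y)\in Y$. Symmetric: for every permutation $\pi$ of $X$ and $c\in\mathfrak{C}$, $(\pi*c)(Y)=\pi^{-1}(c(\pi(Y)))$ is in $\mathfrak{C}$. $\mathfrak{C}$ is closed under an $n$-place $f$ if for all $c_1,\dots,c_n\in\mathfrak{C}$, the function $Y\mapsto f(c_1(Y),\dots,c_n(Y))$ is in $\mathfrak{C}$. $f_{r;1,2}(\bar x)=x_1$ if $\bar x\in X^r$ has a repetition and $x_2$ otherwise. *)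

From mathcomp Require Import all_boot all_fingroup.
Set Implicit Arguments. Unset Strict Implicit. Unset Printing Implicit Defensive.

Definition op (X : finType) (n : nat) := {ffun n.-tuple X -> X}.

Definition is_clone (X : finType) (F : forall n, op X n -> Prop) : Prop :=
  (forall n (i : 'I_n), F n [ffun x : n.-tuple X => tnth x i]) /\
  (forall n m (f : op X n) (g : 'I_n -> op X m),
      F n f -> (forall i, F m (g i)) ->
      F m [ffun x : m.-tuple X => f [tuple g i x | i < n]]).

Notation ksub X k := {Y : {set X} | #|Y| == k}.

Notation kfun X k := {ffun ksub X k -> X}.
Definition is_choice (X : finType) (k : nat) (c : kfun X k) : Prop :=
  forall Y : ksub X k, c Y \in val Y.

Lemma card_perm_img (X : finType) (k : nat) (pi : {perm X}) (Y : ksub X k) :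
  #|pi @: val Y| == k.
Proof. rewrite card_imset; [exact: (valP Y) | exact: perm_inj]. Qed.

Definition kimg (X : finType) (k : nat) (pi : {perm X}) (Y : ksub X k)
  : ksub X k := exist _ (pi @: val Y) (card_perm_img pi Y).

Definition perm_act (X : finType) (k : nat) (pi : {perm X}) (c : kfun X k)
  : kfun X k := [ffun Y => (pi^-1)%g (c (kimg pi Y))].

Definition symmetric_fam (X : finType) (k : nat) (C : kfun X k -> Prop) :=
  forall (pi : {perm X}) c, C c -> C (perm_act pi c).

Definition closed_under (X : finType) (k n : nat) (C : kfun X k -> Prop)
  (f : op X n) : Prop :=
  forall cs : 'I_n -> kfun X k, (forall i, C (cs i)) ->
    C [ffun Y => f [tuple cs i Y | i < n]].

(* f is f_{r;1,2}: returns x_1 if x has a repetition and x_2 otherwise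
   (x_1, x_2 are the entries of index 0 and 1). *)
Definition is_f_r12 (X : finType) (r : nat) (f : op X r) : Prop :=
  forall (x : r.-tuple X) (i1 i2 : 'I_r), val i1 = 0 -> val i2 = 1 ->
    f x = if uniq x then tnth x i2 else tnth x i1.

From mathcomp Require Import all_boot all_fingroup.
From mathcomp Require Import zify.
From Stdlib Require Import Lia.
Set Implicit Arguments. Unset Strict Implicit. Unset Printing Implicit Defensive.

(* Closure under the selectors f_a yields a ternary rule: if d1, d2, d3 in C
   take distinct values at Y0, some member of C takes the value of d2 at Y0
   and the value of d1 at every set where two of the three values coincide
   (pad the three values at Y0 to an injective r-tuple by transported copies
   of d1; this is where r <= k is used).  With symmetry, the rule shows that
   for distinct k-sets Y0, Y1 every pair (u, v) in Y0 x Y1 is the pair of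
   values of a member of C: two realised pairs sharing a coordinate suffice,
   and a transposition fixing Y0 and Y1 produces them, after first moving Y1
   by a transposition when Y0 and Y1 differ in a single element.  An arbitrary
   choice function is then reached from a member of C by correcting its values
   one k-set at a time, each correction being one application of the rule. *)

Lemma exists_avoid2 (T : finType) (S : {set T}) (a b : T) :
  3 <= #|S| -> exists z, [/\ z \in S, z != a & z != b].
Proof.
move=> S3; have : 0 < #|S :\: [set a; b]|.
  rewrite cardsD; have := subset_leq_card (subsetIr S [set a; b]).
  by have := cards2 a b; case: (a == b) => /=; lia.
by case/card_gt0P => z; rewrite !inE negb_or => /andP[/andP[za zb] zS]; exists z.
Qed.

Lemma eq_card_neq_cases (T : finType) (A B : {set T}) :
  #|A| = #|B| -> A != B ->
  1 < #|A :\: B| \/ exists a b, [/\ a \in A, b \notin A & B = b |: (A :\ a)].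
Proof.
move=> eqAB neqAB; have eqD : #|A :\: B| = #|B :\: A| by rewrite !cardsD eqAB setIC.
have pos : 0 < #|A :\: B|.
  rewrite lt0n cards_eq0 setD_eq0; apply: contraNN neqAB => subAB.
  by rewrite eqEcard subAB eqAB /=.
have [gt1|le1] := ltnP 1 #|A :\: B|; [by left | right].
have /cards1P[a Ea] : #|A :\: B| == 1 by rewrite eqn_leq le1.
have /cards1P[b Eb] : #|B :\: A| == 1 by rewrite -eqD eqn_leq le1.
have := set11 a; rewrite -Ea inE => /andP[aB aA].
have := set11 b; rewrite -Eb inE => /andP[bA bB].
exists a, b; split => //; apply/setP => z; rewrite !inE.
have /setP/(_ z) := Ea; have /setP/(_ z) := Eb; rewrite !inE.
by case: (z \in A); case: (z \in B); case: (z == a); case: (z == b).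
Qed.

Lemma mem_tperm_imset (T : finType) (x y z : T) (S : {set T}) :
  (z \in tperm x y @: S) = (tperm x y z \in S).
Proof. by rewrite -{1}(tpermK x y z) mem_imset //; exact: perm_inj. Qed.

Lemma tperm_imset_id (T : finType) (x y : T) (S : {set T}) :
  (x \in S) = (y \in S) -> tperm x y @: S = S.
Proof.
move=> xyS; apply/setP => z; rewrite mem_tperm_imset.
by case: tpermP => [->|->|//]; rewrite xyS.
Qed.

Lemma tperm_imset_exchange (T : finType) (q b : T) (S : {set T}) :
  q \in S -> b \notin S -> tperm q b @: S = b |: (S :\ q).
Proof.
move=> qS bS; have qb : q != b by apply: contraNneq bS => <-.
apply/setP => z; rewrite mem_tperm_imset !inE.
case: tpermP => [->|->|/eqP zq /eqP zb]; last by rewrite zq (negbTE zb).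
  by rewrite eqxx (negbTE bS) (negbTE qb).
by rewrite qS eqxx.
Qed.

Lemma uniq3 (T : eqType) (x y z : T) :
  uniq [:: x; y; z] = [&& x != y, x != z & y != z].
Proof. by rewrite /= !inE !negb_or andbT andbA. Qed.

Definition is_r12_selector (X : finType) (r : nat) (f : op X r) (a : r.-tuple X) :=
  forall i1 i2 : 'I_r, val i1 = 0 -> val i2 = 1 ->
    f a = tnth a i2 /\ (forall b : r.-tuple X, ~~ uniq b -> f b = tnth b i1).

Lemma is_r12_selector_of_f_r12 (X : finType) (r : nat) (f : op X r) (a : r.-tuple X) :
  is_f_r12 f -> uniq a -> is_r12_selector f a.
Proof.
move=> f12 ua i1 i2 i1_0 i2_1; rewrite (f12 a i1 i2) // ua; split=> // b /negbTE ub.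
by rewrite (f12 b i1 i2) // ub.
Qed.

Definition attains (X : finType) (k : nat) (C : kfun X k -> Prop)
  (Y0 Y1 : ksub X k) (u v : X) := exists2 d, C d & d Y0 = u /\ d Y1 = v.

Definition pair_full (X : finType) (k : nat) (C : kfun X k -> Prop) (Y0 Y1 : ksub X k) :=
  forall u v, u \in val Y0 -> v \in val Y1 -> attains C Y0 Y1 u v.

(* e acts as f_{3;1,2}(d1, d2, d3) at Y0 and at every Y where the three values
   repeat. *)
Definition f312_closed (X : finType) (k : nat) (C : kfun X k -> Prop) :=
  forall d1 d2 d3, C d1 -> C d2 -> C d3 ->
  forall Y0 : ksub X k, uniq [:: d1 Y0; d2 Y0; d3 Y0] ->
  exists2 e, C e & e Y0 = d2 Y0 /\
    forall Y, ~~ uniq [:: d1 Y; d2 Y; d3 Y] -> e Y = d1 Y.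

Section ChoiceFamily.

Variables (X : finType) (k : nat) (C : kfun X k -> Prop).
Hypothesis C_choice : forall c, C c -> is_choice c.
Hypothesis C_sym : symmetric_fam C.

Lemma card_ksub (Y : ksub X k) : #|val Y| = k.
Proof. exact: eqP (valP Y). Qed.

Lemma kimg_tperm_id (x y : X) (Y : ksub X k) :
  (x \in val Y) = (y \in val Y) -> kimg (tperm x y) Y = Y.
Proof. by move=> xyY; apply: val_inj; rewrite /= tperm_imset_id. Qed.

Lemma perm_act_id_at (pi : {perm X}) (c : kfun X k) (Y : ksub X k) :
  kimg pi Y = Y -> perm_act pi c Y = (pi^-1)%g (c Y).
Proof. by move=> piY; rewrite ffunE piY. Qed.

Lemma attains_sym (Y0 Y1 : ksub X k) u v :
  attains C Y0 Y1 u v -> attains C Y1 Y0 v u.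
Proof. by case=> d Cd [dY0 dY1]; exists d. Qed.

Lemma pair_full_sym (Y0 Y1 : ksub X k) : pair_full C Y1 Y0 -> pair_full C Y0 Y1.
Proof. by move=> full u v uY0 vY1; apply/attains_sym/full. Qed.

Lemma attains_kimg (pi : {perm X}) (Y0 Y1 : ksub X k) u v :
  attains C (kimg pi Y0) (kimg pi Y1) (pi u) (pi v) -> attains C Y0 Y1 u v.
Proof.
case=> e Ce [eY0 eY1]; exists (perm_act pi e); first exact: C_sym.
by rewrite !ffunE eY0 eY1 !permK.
Qed.

Lemma pair_full_kimg (pi : {perm X}) (Y0 Y1 : ksub X k) :
  pair_full C (kimg pi Y0) (kimg pi Y1) -> pair_full C Y0 Y1.
Proof. by move=> full u v uY0 vY1; apply: attains_kimg; apply: full; apply: imset_f. Qed.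

Lemma perm_act_tperm_at (c : kfun X k) (Y : ksub X k) w :
  C c -> w \in val Y -> perm_act (tperm (c Y) w) c Y = w.
Proof.
move=> Cc wY; rewrite perm_act_id_at ?tpermV ?tpermL //.
by apply: kimg_tperm_id; rewrite wY; apply: C_choice.
Qed.

Lemma exists_member_at (c : kfun X k) (Y : ksub X k) w :
  C c -> w \in val Y -> exists2 d, C d & d Y = w.
Proof.
move=> Cc wY; exists (perm_act (tperm (c Y) w) c); first exact: C_sym.
exact: perm_act_tperm_at.
Qed.

Lemma extend_distinct_values (r : nat) (Y0 : ksub X k) (d0 : kfun X k)
    (ds0 : seq (kfun X k)) :
  C d0 -> (forall d, d \in ds0 -> C d) -> uniq [seq d Y0 | d : kfun X k <- ds0] ->
  r <= k ->
  exists ds : 'I_r -> kfun X k, [/\ forall i, C (ds i),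
    uniq [tuple ds i Y0 | i < r] & forall i : 'I_r, i < size ds0 -> ds i = nth d0 ds0 i].
Proof.
move=> Cd0 Cds0 uds0 rk.
set vals0 := [seq d Y0 | d : kfun X k <- ds0].
set vals := vals0 ++ [seq x <- enum (val Y0) | x \notin vals0].
have vals_uniq : uniq vals.
  rewrite cat_uniq uds0 filter_uniq ?enum_uniq // andbT.
  by apply/hasPn => x; rewrite mem_filter => /andP[].
have vals_sub : {subset vals <= val Y0}.
  move=> x; rewrite mem_cat mem_filter mem_enum => /orP[/mapP[d dds0 ->]|/andP[] //].
  exact: C_choice (Cds0 _ dds0) Y0.
have vals_size : k <= size vals.
  rewrite -(card_ksub Y0) (leq_trans _ (card_size vals)) //.
  apply/subset_leq_card/subsetP => x xY0.
  by rewrite mem_cat mem_filter mem_enum xY0 andbT orbN.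
have i_vals (i : 'I_r) : i < size vals by apply: leq_trans (ltn_ord i) (leq_trans rk _).
pose ds (i : 'I_r) := if i < size ds0 then nth d0 ds0 i
  else perm_act (tperm (d0 Y0) (nth (d0 Y0) vals i)) d0.
have ds_at (i : 'I_r) : ds i Y0 = nth (d0 Y0) vals i.
  rewrite /ds; case: ifP => [ids0|_].
    by rewrite nth_cat size_map ids0 (nth_map d0).
  by apply: perm_act_tperm_at => //; apply/vals_sub/mem_nth.
exists ds; split.
- move=> i; rewrite /ds; case: ifP => [ids0|_]; [exact/Cds0/mem_nth | exact: C_sym].
- apply/tuple_uniqP => i j; rewrite !tnth_mktuple !ds_at => /eqP.
  by rewrite nth_uniq // => /eqP/val_inj.
- by move=> i ids0; rewrite /ds ids0.
Qed.

Lemma f312_closed_of_selectors (r : nat) :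
  3 <= r -> r <= k ->
  (forall a : r.-tuple X, uniq a ->
     exists2 f : op X r, closed_under C f & is_r12_selector f a) ->
  f312_closed C.
Proof.
move=> r3 rk sel d1 d2 d3 C1 C2 C3 Y0 u123.
have C123 d : d \in [:: d1; d2; d3] -> C d by rewrite !inE => /or3P[]/eqP->.
have [ds [Cds uds ds_head]] :=
  @extend_distinct_values r Y0 d1 [:: d1; d2; d3] C1 C123 u123 rk.
have [f Cf f_sel] := sel _ uds.
have r0 : 0 < r by lia.
have r1 : 1 < r by lia.
have r2 : 2 < r by lia.
have [f_at f_rep] := f_sel (Ordinal r0) (Ordinal r1) erefl erefl.
exists [ffun Y => f [tuple ds i Y | i < r]]; first exact: Cf.
split=> [|Y rep]; rewrite ffunE; first by rewrite f_at tnth_mktuple ds_head.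
rewrite f_rep ?tnth_mktuple ?ds_head //; apply: contra rep => /tuple_uniqP inj.
have -> : [:: d1 Y; d2 Y; d3 Y] =
    map (tnth [tuple ds i Y | i < r]) [:: Ordinal r0; Ordinal r1; Ordinal r2].
  by rewrite /= !tnth_mktuple !ds_head.
by rewrite map_inj_uniq.
Qed.

Hypothesis C_f312 : f312_closed C.
Variable c0 : kfun X k.
Hypothesis C_c0 : C c0.
Hypothesis k_ge4 : 4 <= k.

Lemma pair_full_of_left_partners (Y0 Y1 : ksub X k) u1 u2 v :
  u1 != u2 -> attains C Y0 Y1 u1 v -> attains C Y0 Y1 u2 v -> pair_full C Y0 Y1.
Proof.
move=> u12 [d1 C1 [d1Y0 d1Y1]] [d2 C2 [d2Y0 d2Y1]].
have fiber u : u \in val Y0 -> attains C Y0 Y1 u v.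
  move=> uY0; case: (eqVneq u u1) => [->|uu1]; first by exists d1.
  case: (eqVneq u u2) => [->|uu2]; first by exists d2.
  have [d Cd dY0] := exists_member_at C_c0 uY0.
  have u3 : uniq [:: d1 Y0; d Y0; d2 Y0].
    by rewrite d1Y0 dY0 d2Y0 uniq3 u12 uu2 eq_sym uu1.
  have [e Ce [eY0 erep]] := C_f312 C1 Cd C2 u3.
  exists e => //; split; first by rewrite eY0.
  by rewrite erep // d1Y1 d2Y1 uniq3 eqxx /= !andbF.
move=> u w uY0 wY1.
have [d Cd dY1] := exists_member_at C_c0 wY1.
case: (eqVneq u (d Y0)) => [->|ud]; first by exists d.
have Y0_ge3 : 3 <= #|val Y0| by rewrite card_ksub ltnW.
have [p [pY0 pd pu]] := exists_avoid2 (d Y0) u Y0_ge3.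
have [du Cdu [duY0 duY1]] := fiber u uY0.
have [dp Cdp [dpY0 dpY1]] := fiber p pY0.
have u3 : uniq [:: d Y0; du Y0; dp Y0].
  by rewrite duY0 dpY0 uniq3 eq_sym ud eq_sym pd eq_sym pu.
have [e Ce [eY0 erep]] := C_f312 Cd Cdu Cdp u3.
exists e => //; split; first by rewrite eY0.
by rewrite erep // duY1 dpY1 uniq3 eqxx /= !andbF.
Qed.

Lemma pair_full_of_swap (Y0 Y1 : ksub X k) x y w :
  x != y -> (x \in val Y0) = (y \in val Y0) -> (x \in val Y1) = (y \in val Y1) ->
  x != w -> y != w -> attains C Y0 Y1 x w -> pair_full C Y0 Y1.
Proof.
move=> xy xyY0 xyY1 xw yw xw_att; apply: (pair_full_of_left_partners xy xw_att).
by apply: (@attains_kimg (tperm x y)); rewrite !kimg_tperm_id // tpermR tpermD.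
Qed.

Lemma pair_full_of_swap_right (Y0 Y1 : ksub X k) x y w :
  x != y -> (x \in val Y0) = (y \in val Y0) -> (x \in val Y1) = (y \in val Y1) ->
  x != w -> y != w -> attains C Y0 Y1 w x -> pair_full C Y0 Y1.
Proof.
move=> xy xyY0 xyY1 xw yw /attains_sym wx_att.
exact/pair_full_sym/(pair_full_of_swap xy xyY1 xyY0 xw yw wx_att).
Qed.

Lemma pair_full_exchange (Y0 Y1 : ksub X k) a b :
  a \in val Y0 -> b \notin val Y0 -> val Y1 = b |: (val Y0 :\ a) -> pair_full C Y0 Y1.
Proof.
move=> aY0 bY0 Y1E.
have I_ge3 : 3 <= #|val Y0 :\ a|.
  by have := card_ksub Y0; rewrite (cardsD1 a) aY0; lia.
have memY1 z : (z \in val Y1) = (z == b) || (z != a) && (z \in val Y0).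
  by rewrite Y1E !inE.
have ab : a != b by apply: contraNneq bY0 => <-.
have [d Cd dY0] := exists_member_at C_c0 aY0.
have dY1 := C_choice Cd Y1.
case: (eqVneq (d Y1) b) => [db|nb]; last first.
  rewrite memY1 (negbTE nb) /= in dY1; case/andP: dY1 => da vY0.
  have [s [sI sv _]] := exists_avoid2 (d Y1) (d Y1) I_ge3.
  move: sI; rewrite !inE => /andP[sa sY0].
  apply: (@pair_full_of_swap_right _ _ (d Y1) s a) => //.
  - by rewrite eq_sym.
  - by rewrite vY0 sY0.
  - by rewrite !memY1 da vY0 sa sY0 !orbT.
  - by exists d.
have [q [qI _ _]] := exists_avoid2 a a I_ge3; move: qI; rewrite !inE => /andP[qa qY0].
have qb : q != b by apply: contraNneq bY0 => <-.
(* The remaining case d Y0 = a, d Y1 = b goes through Y' = b |: (Y0 :\ q),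
   the image of Y0 under (q b) and of Y1 under (q a). *)
set Y' := kimg (tperm q b) Y0.
have memY' z : (z \in val Y') = (z == b) || (z != q) && (z \in val Y0).
  by rewrite /= tperm_imset_exchange // !inE.
have [s [sI sq sw]] := exists_avoid2 q (d Y') I_ge3.
move: sI; rewrite !inE => /andP[sa sY0].
have sb : s != b by apply: contraNneq bY0 => <-.
case: (eqVneq (d Y') a) => [da|nda].
  apply: (@pair_full_kimg (tperm q b)).
  rewrite (@kimg_tperm_id q b Y1); last by rewrite !memY1 qa qY0 eqxx !orbT.
  apply: (@pair_full_of_swap_right _ _ b s a) => //.
  - by rewrite eq_sym.
  - by rewrite !memY' eqxx (negbTE sb) sq sY0.
  - by rewrite !memY1 eqxx (negbTE sb) sa sY0.
  - by rewrite eq_sym.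
  - by exists d.
apply: (@pair_full_kimg (tperm q a)).
rewrite (@kimg_tperm_id q a Y0) ?qY0 ?aY0 //.
have -> : kimg (tperm q a) Y1 = Y'.
  apply: val_inj; apply/setP => z; rewrite memY' /= mem_tperm_imset memY1.
  case: tpermP => [->|->|/eqP zq /eqP za]; last by rewrite za zq.
    by rewrite !eqxx (negbTE ab) (negbTE qb).
  by rewrite (negbTE qb) qa qY0 (negbTE ab) aY0 eq_sym qa.
apply: (@pair_full_of_swap _ _ a s (d Y')) => //.
- by rewrite eq_sym.
- by rewrite aY0 sY0.
- by rewrite !memY' aY0 sY0 (negbTE ab) (negbTE sb) sq eq_sym qa.
- by rewrite eq_sym.
- by exists d.
Qed.

Lemma pair_full_of_neq (Y0 Y1 : ksub X k) : Y0 != Y1 -> pair_full C Y0 Y1.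
Proof.
move=> Y01; have : val Y0 != val Y1 by apply: contraNneq Y01 => /val_inj->.
have card01 : #|val Y0| = #|val Y1| by rewrite !card_ksub.
case/(eq_card_neq_cases card01) => [/card_gt1P[u [q [uD qD uq]]]|[a [b [aY0 bY0 Y1E]]]].
  move: uD qD; rewrite !inE => /andP[uY1 uY0] /andP[qY1 qY0].
  have [d Cd dY0] := exists_member_at C_c0 uY0.
  have dY1 := C_choice Cd Y1.
  apply: (@pair_full_of_swap _ _ u q (d Y1)) => //.
  - by rewrite uY0 qY0.
  - by rewrite (negbTE uY1) (negbTE qY1).
  - by apply: contraNneq uY1 => ->.
  - by apply: contraNneq qY1 => ->.
  - by exists d.
exact: pair_full_exchange aY0 bY0 Y1E.
Qed.

Lemma exists_update (c : kfun X k) (L : seq (ksub X k)) (Y0 : ksub X k) z :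
  C c -> Y0 \notin L -> z \in val Y0 ->
  exists2 e, C e & e Y0 = z /\ {in L, e =1 c}.
Proof.
move=> Cc Y0L zY0; case: (eqVneq z (c Y0)) => [->|zc]; first by exists c.
elim: L Y0L => [_|Y1 L IH].
  by have [d Cd dY0] := exists_member_at C_c0 zY0; exists d.
rewrite inE negb_or => /andP[Y01 /IH[ez Cez [ezY0 ezL]]].
have Y0_ge3 : 3 <= #|val Y0| by rewrite card_ksub ltnW.
have [z' [z'Y0 z'c z'z]] := exists_avoid2 (c Y0) z Y0_ge3.
have [e' Ce' [e'Y0 e'Y1]] := pair_full_of_neq Y01 z'Y0 (C_choice Cc Y1).
have u3 : uniq [:: c Y0; ez Y0; e' Y0].
  by rewrite ezY0 e'Y0 uniq3 eq_sym zc eq_sym z'c eq_sym z'z.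
have [e Ce [eY0 erep]] := C_f312 Cc Cez Ce' u3.
exists e => //; split; first by rewrite eY0.
move=> Y; rewrite inE => /predU1P[->|YL]; rewrite erep //.
  by rewrite e'Y1 uniq3 eqxx /= !andbF.
by rewrite ezL // uniq3 eqxx.
Qed.

Lemma choice_family_full (g : kfun X k) : is_choice g -> C g.
Proof.
move=> g_choice.
suff [e Ce eg] : exists2 e, C e & {in enum [set: ksub X k], e =1 g}.
  suff -> : g = e by [].
  by apply/ffunP => Y; rewrite eg // mem_enum inE.
elim: (enum _) => [|Y0 L [e Ce eL]]; first by exists c0.
case: (boolP (Y0 \in L)) => [Y0L|Y0L].
  by exists e => // Y; rewrite inE => /predU1P[->|]; apply: eL.
have [e' Ce' [e'Y0 e'L]] := exists_update Ce Y0L (g_choice Y0).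
by exists e' => // Y; rewrite inE => /predU1P[->|YL] //; rewrite e'L // eL.
Qed.

End ChoiceFamily.

Theorem lemma12p1 (X : finType) (r k : nat)
  (F : forall n, op X n -> Prop) (C : kfun X k -> Prop) :
  3 <= r -> r <= k -> 5 <= k -> maxn 7 r <= #|X| - k ->
  is_clone F ->
  ((exists f : op X r, F r f /\ is_f_r12 f) \/
   (forall a : r.-tuple X, uniq a ->
      exists f : op X r, F r f /\
        forall i1 i2 : 'I_r, val i1 = 0 -> val i2 = 1 ->
          f a = tnth a i2 /\
          (forall b : r.-tuple X, ~~ uniq b -> f b = tnth b i1))) ->
  (forall c, C c -> is_choice c) ->
  (exists c, C c) ->
  symmetric_fam C ->
  (forall n (f : op X n), F n f -> closed_under C f) ->
  forall c : kfun X k, is_choice c -> C c.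
Proof.
move=> r3 rk k5 _ _ F_sel C_choice [c0 C_c0] C_sym C_F.
have sel (a : r.-tuple X) :
    uniq a -> exists2 f : op X r, closed_under C f & is_r12_selector f a.
  move=> ua; case: F_sel => [[f [Ff f12]]|F_sel].
    by exists f; [exact: C_F | exact: is_r12_selector_of_f_r12].
  by have [f [Ff f_sel]] := F_sel a ua; exists f; first exact: C_F.
have C_f312 := f312_closed_of_selectors C_choice C_sym r3 rk sel.
exact: (choice_family_full C_choice C_sym C_f312 C_c0 (ltnW k5)).
Qed.
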